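(* Let $Q\in\mathbb R^{m\times n}$ with $\mathrm{rank}(Q)=n$, $p\in\mathbb R^m$, $r>0$, and $\mathcal S=\{x\in\mathbb R^n:\|Qx-p\|_2\le r\}$ with $\mathcal S\cap\mathbb Z^n\neq\emptyset$. Let $\hat x$ be a boundary point of $\mathcal S$. Then $$\min_{x\in\mathcal S\cap\mathbb Z^n}\|x-\hat x\|_2\le 2\,\|Q(Q^TQ)^{-1}\|_2\,\mu(Q).$$ Moreover, for every $\alpha\in\mathbb R^n$, $$\min_{x\in\mathcal S\cap\mathbb Z^n}\alpha^Tx-\min_{x\in\mathcal S}\alpha^Tx\le 2\,\|Q(Q^TQ)^{-1}\|_2\,\|\alpha\|_2\,\mu(Q).$$
   Context: For $Q\in\mathbb R^{m\times n}$ of full column rank, $\mu(Q)$ denotes the covering radius of the lattice $Q\mathbb Z^n$: $\mu(Q)=\max_{x\in\mathbb R^n}\min_{z\in\mathbb Z^n}\|Qx-Qz\|_2$. $\|\cdot\|_2$ applied to a matrix is the spectral (operator) norm. *)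

From HB Require Import structures.
From mathcomp Require Import all_boot all_order all_algebra.
From mathcomp Require Import all_classical all_reals all_analysis.
Unset Printing Implicit Defensive.
Import Order.TTheory GRing.Theory Num.Theory.
Import numFieldNormedType.Exports.
Local Open Scope classical_set_scope.
Local Open Scope ring_scope.

Definition norm2 {R : realType} {n : nat} (v : 'cV[R]_n) : R :=
  Num.sqrt (\sum_(i < n) v i 0 ^+ 2).

Definition dotv {R : realType} {n : nat} (a x : 'cV[R]_n) : R :=
  \sum_(i < n) a i 0 * x i 0.

Definition spec_norm {R : realType} {m n : nat} (A : 'M[R]_(m, n)) : R :=
  sup [set norm2 (A *m x) | x in [set x : 'cV[R]_n | norm2 x <= 1]].

Definition intvecs (R : realType) (n : nat) : set 'cV[R]_n :=
  [set z | forall i, z i 0 \is a Num.int].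

Definition covering_radius {R : realType} {m n : nat} (Q : 'M[R]_(m, n)) : R :=
  sup [set inf [set norm2 (Q *m x - Q *m z) | z in intvecs R n] | x in [set: 'cV[R]_n]].

Definition boundary {T : topologicalType} (A : set T) : set T :=
  closure A `\` interior A.

(** The least-squares solution [xc = (Q^T Q)^-1 Q^T p] turns [S] into the
    ellipsoid [{x | |Q(x - xc)| <= rho}], since [|Qx - p|^2 = |Q(x - xc)|^2 +
    |Q xc - p|^2].  Given any [x] in [S], move it towards the centre until the
    ball of radius [mu] (the covering radius) around its image fits in the
    image ellipsoid; that ball contains a lattice point [Qz], which lies in
    [Q S] and within [2 mu] of [Qx].  Since [|x|^2 = (Qx)^T P x] with
    [P = Q (Q^T Q)^-1], Cauchy-Schwarz gives [|x| <= |P| |Qx|], which converts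
    [|Q(z - x)| <= 2 mu] into [|z - x| <= 2 |P| mu].  Both
    claims follow by applying this to points of [S] approximating [xhat], resp.
    the infimum of [alpha^T x] over [S]. *)

From HB Require Import structures.
From mathcomp Require Import all_boot all_order all_algebra.
From mathcomp Require Import all_classical all_reals all_analysis.
From mathcomp Require Import ring lra.
Import Order.TTheory GRing.Theory Num.Theory.
Import numFieldNormedType.Exports.
Local Open Scope classical_set_scope.
Local Open Scope ring_scope.

Section EuclideanGeometry.
Context {R : realType}.
Implicit Types (m n : nat).

Lemma dotvE {n} (a b : 'cV[R]_n) : dotv a b = (a^T *m b) 0 0.
Proof. by rewrite /dotv mxE; apply: eq_bigr => i _; rewrite mxE. Qed.

Lemma dotvC {n} (a b : 'cV[R]_n) : dotv a b = dotv b a.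
Proof. by rewrite /dotv; apply: eq_bigr => i _; rewrite mulrC. Qed.

Lemma dotvBr {n} (a b c : 'cV[R]_n) : dotv a (b - c) = dotv a b - dotv a c.
Proof. by rewrite !dotvE mulmxBr !mxE. Qed.

Lemma dotv0r {n} (a : 'cV[R]_n) : dotv a 0 = 0.
Proof. by rewrite dotvE mulmx0 mxE. Qed.

Lemma dotv_mulmx {m n} (A : 'M[R]_(m, n)) x y :
  dotv (A *m x) y = dotv x (A^T *m y).
Proof. by rewrite !dotvE trmx_mul mulmxA. Qed.

Lemma dotv_ge0 {n} (a : 'cV[R]_n) : 0 <= dotv a a.
Proof. by apply: sumr_ge0 => i _; rewrite -expr2 sqr_ge0. Qed.

Lemma dotv_eq0 {n} (a : 'cV[R]_n) : dotv a a = 0 -> a = 0.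
Proof.
move=> a0; apply/matrixP => i j; rewrite (ord1 j) mxE.
have sq_ge0 (k : 'I_n) : xpredT k -> 0 <= a k 0 * a k 0 by rewrite -expr2 sqr_ge0.
by move: (@psumr_eq0P _ _ xpredT _ sq_ge0 a0 i isT) => /eqP; rewrite mulf_eq0 orbb => /eqP.
Qed.

Lemma dotv_combination {n} (k l : R) (a b : 'cV[R]_n) :
  dotv (k *: a + l *: b) (k *: a + l *: b) =
  k ^+ 2 * dotv a a + 2 * k * l * dotv a b + l ^+ 2 * dotv b b.
Proof.
rewrite /dotv !mulr_sumr -!big_split /=; apply: eq_bigr => i _; rewrite !mxE; ring.
Qed.

Lemma norm2_ge0 {n} (a : 'cV[R]_n) : 0 <= norm2 a.
Proof. exact: sqrtr_ge0. Qed.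

Lemma norm2_sqr {n} (a : 'cV[R]_n) : norm2 a ^+ 2 = dotv a a.
Proof.
rewrite sqr_sqrtr; last by apply: sumr_ge0 => i _; rewrite sqr_ge0.
by apply: eq_bigr => i _; rewrite expr2.
Qed.

Lemma norm2_eq0 {n} (a : 'cV[R]_n) : norm2 a = 0 -> a = 0.
Proof. by move=> a0; apply: dotv_eq0; rewrite -norm2_sqr a0 expr0n. Qed.

Lemma norm20 {n} : norm2 (0 : 'cV[R]_n) = 0.
Proof. by rewrite /norm2 big1 ?sqrtr0 // => i _; rewrite mxE expr0n. Qed.

Lemma norm2Z {n} (k : R) (a : 'cV[R]_n) : norm2 (k *: a) = `|k| * norm2 a.
Proof.
rewrite /norm2 (eq_bigr (fun i => k ^+ 2 * a i 0 ^+ 2)) => [|i _]; last first.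
  by rewrite mxE exprMn.
by rewrite -mulr_sumr sqrtrM ?sqr_ge0 // sqrtr_sqr.
Qed.

Lemma norm2N {n} (a : 'cV[R]_n) : norm2 (- a) = norm2 a.
Proof. by rewrite -scaleN1r norm2Z normrN1 mul1r. Qed.

Lemma norm2_gt0 {n} (a : 'cV[R]_n) : a != 0 -> 0 < norm2 a.
Proof. by move=> a0; rewrite lt_def norm2_ge0 andbT; apply: contra a0 => /eqP/norm2_eq0->. Qed.

Lemma dotv_le_norm2 {n} (a b : 'cV[R]_n) : dotv a b <= norm2 a * norm2 b.
Proof.
have [->|a0] := eqVneq a 0; first by rewrite dotvC dotv0r norm20 mul0r.
have [->|b0] := eqVneq b 0; first by rewrite dotv0r norm20 mulr0.
have := dotv_ge0 (norm2 b *: a + (- norm2 a) *: b).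
rewrite dotv_combination -!norm2_sqr.
have := mulr_gt0 (norm2_gt0 _ a0) (norm2_gt0 _ b0); nra.
Qed.

Lemma dotv_ge_norm2 {n} (a b : 'cV[R]_n) : - (norm2 a * norm2 b) <= dotv a b.
Proof.
rewrite lerNl -[norm2 b]norm2N.
have -> : - dotv a b = dotv a (- b) by rewrite -[- b]add0r dotvBr dotv0r add0r.
exact: dotv_le_norm2.
Qed.

Lemma norm2D {n} (a b : 'cV[R]_n) : norm2 (a + b) <= norm2 a + norm2 b.
Proof.
rewrite -ler_sqr ?nnegrE ?addr_ge0 ?norm2_ge0 //.
have -> : a + b = 1 *: a + 1 *: b by rewrite !scale1r.
rewrite norm2_sqr dotv_combination -!norm2_sqr.
have := dotv_le_norm2 a b; nra.
Qed.

Lemma norm2B {n} (a b : 'cV[R]_n) : norm2 (a - b) <= norm2 a + norm2 b.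
Proof. by rewrite -(norm2N b) norm2D. Qed.

Lemma norm2_entry {n} (x : 'cV[R]_n) i : `|x i 0| <= norm2 x.
Proof.
rewrite -ler_sqr ?nnegrE ?norm2_ge0 // real_normK ?num_real //.
rewrite sqr_sqrtr; last by apply: sumr_ge0 => j _; rewrite sqr_ge0.
by rewrite (bigD1 i) //= lerDl; apply: sumr_ge0 => j _; rewrite sqr_ge0.
Qed.

Lemma norm2_le_entries {n} (v : 'cV[R]_n) (B : R) :
  0 <= B -> (forall i, `|v i 0| <= B) -> norm2 v <= Num.sqrt n%:R * B.
Proof.
move=> B0 vB; rewrite -(ger0_norm B0) -sqrtr_sqr -sqrtrM ?ler0n //.
rewrite ler_sqrt ?mulr_ge0 ?ler0n ?sqr_ge0 //.
have -> : n%:R * B ^+ 2 = \sum_(i < n) B ^+ 2.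
  by rewrite sumr_const card_ord mulr_natl.
apply: ler_sum => i _.
by rewrite -real_normK ?num_real // ler_sqr ?nnegrE ?normr_ge0.
Qed.

Lemma ler_addgt0Mr (a b c : R) :
  0 <= c -> (forall d, 0 < d -> a <= b + d * c) -> a <= b.
Proof.
move=> c0 abc; apply/ler_addgt0Pr => e e_gt0.
have c1 : 0 < c + 1 by lra.
apply: le_trans (abc (e / (c + 1)) _) _; first by rewrite divr_gt0.
by rewrite lerD2l mulrAC ler_pdivrMr // ler_wpM2l; lra.
Qed.

Lemma closure_norm2_approx {n} (A : set 'cV[R]_n) y e :
  closure A y -> 0 < e -> exists2 x, A x & norm2 (x - y) <= e.
Proof.
move=> Ay e_gt0; pose sn : R := Num.sqrt n%:R.
have sn_gt0 : 0 < sn + 1 := ltr_wpDl (sqrtr_ge0 _) ltr01.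
have [x [Ax [_ xy]]] := Ay _ (nbhsx_ballx y _ (divr_gt0 e_gt0 sn_gt0)).
exists x => //; apply: le_trans (norm2_le_entries (x - y) (e / (sn + 1)) _ _) _.
- by rewrite ltW ?divr_gt0.
- by move=> i; have := xy i 0; rewrite !mxE distrC => /ltW.
- by rewrite -/sn mulrCA ger_pMr // ler_pdivrMr // mul1r lerDl.
Qed.

Lemma mulmx_norm2_bounded {m n} (A : 'M[R]_(m, n)) :
  exists2 K, 0 <= K & forall x, norm2 (A *m x) <= K * norm2 x.
Proof.
pose C := \sum_(i < m) \sum_(j < n) `|A i j|.
have C0 : 0 <= C by do 2!apply: sumr_ge0 => ? _.
exists (Num.sqrt m%:R * C) => [|x]; first by rewrite mulr_ge0 ?sqrtr_ge0.
rewrite -mulrA; apply: norm2_le_entries => [|i]; first by rewrite mulr_ge0 ?norm2_ge0.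
rewrite mxE; apply: le_trans (ler_norm_sum _ _ _) _.
apply: (@le_trans _ _ (\sum_(j < n) `|A i j| * norm2 x)).
  by apply: ler_sum => j _; rewrite normrM ler_wpM2l ?norm2_entry.
rewrite -mulr_suml ler_wpM2r ?norm2_ge0 // /C (bigD1 i) //= lerDl.
by apply: sumr_ge0 => k _; apply: sumr_ge0.
Qed.

Lemma spec_norm_has_ubound {m n} (A : 'M[R]_(m, n)) :
  has_ubound [set norm2 (A *m x) | x in [set x : 'cV[R]_n | norm2 x <= 1]].
Proof.
have [K K0 AK] := mulmx_norm2_bounded A.
exists K => _ [x /= x1 <-]; apply: le_trans (AK x) _.
by rewrite -[leRHS]mulr1 ler_wpM2l.
Qed.

Lemma spec_norm_ge0 {m n} (A : 'M[R]_(m, n)) : 0 <= spec_norm A.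
Proof.
have /ubP := ub_le_sup (spec_norm_has_ubound A); apply.
by exists 0; rewrite /= ?norm20 ?ler01 // mulmx0 norm20.
Qed.

Lemma norm2_mulmx_le {m n} (A : 'M[R]_(m, n)) x :
  norm2 (A *m x) <= spec_norm A * norm2 x.
Proof.
have [->|x0] := eqVneq x 0; first by rewrite mulmx0 !norm20 mulr0.
have x_gt0 := norm2_gt0 _ x0.
pose u := (norm2 x)^-1 *: x.
have u1 : norm2 u <= 1.
  by rewrite /u norm2Z ger0_norm ?invr_ge0 ?norm2_ge0 // mulVf ?gt_eqF.
have /ubP/(_ _ (ex_intro2 _ _ u u1 erefl)) := ub_le_sup (spec_norm_has_ubound A).
rewrite -scalemxAr norm2Z ger0_norm ?invr_ge0 ?norm2_ge0 //.
by rewrite mulrC ler_pdivrMr.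
Qed.

Lemma gram_unitmx {m n} (Q : 'M[R]_(m, n)) : \rank Q = n -> Q^T *m Q \in unitmx.
Proof.
move=> rkQ; rewrite -row_free_unit; apply: inj_row_free => v vQQ.
have QvT : Q *m v^T = 0.
  apply: dotv_eq0; rewrite dotvE trmx_mul trmxK mulmxA -(mulmxA v) vQQ mul0mx.
  by rewrite mxE.
have rfQT : row_free Q^T by rewrite /row_free mxrank_tr rkQ.
apply: (row_free_inj rfQT); rewrite mul0mx.
by rewrite -[v *m Q^T]trmxK trmx_mul trmxK QvT trmx0.
Qed.

Lemma norm2_le_spec_norm_pinv {m n} (Q : 'M[R]_(m, n)) x : \rank Q = n ->
  norm2 x <= spec_norm (Q *m invmx (Q^T *m Q)) * norm2 (Q *m x).
Proof.
move=> rkQ; set P := Q *m invmx (Q^T *m Q).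
have [->|x0] := eqVneq x 0; first by rewrite norm20 mulr_ge0 ?spec_norm_ge0 ?norm2_ge0.
have x_gt0 := norm2_gt0 _ x0.
have xx : dotv x x = dotv (Q *m x) (P *m x).
  by rewrite dotv_mulmx /P !mulmxA mulmxV ?gram_unitmx // mul1mx.
rewrite -(ler_pM2r x_gt0) -expr2 norm2_sqr xx mulrAC.
apply: le_trans (dotv_le_norm2 _ _) _.
by rewrite mulrC ler_wpM2r ?norm2_ge0 ?norm2_mulmx_le.
Qed.

Lemma least_squares_pythagoras {m n} (Q : 'M[R]_(m, n)) (p : 'cV[R]_m) x :
  \rank Q = n ->
  let xc := invmx (Q^T *m Q) *m (Q^T *m p) in
  norm2 (Q *m x - p) ^+ 2 = norm2 (Q *m (x - xc)) ^+ 2 + norm2 (Q *m xc - p) ^+ 2.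
Proof.
move=> rkQ xc.
have normal_eq : Q^T *m (Q *m xc - p) = 0.
  by rewrite mulmxBr /xc !mulmxA mulmxV ?gram_unitmx // mul1mx subrr.
have -> : Q *m x - p = 1 *: (Q *m (x - xc)) + 1 *: (Q *m xc - p).
  by rewrite !scale1r mulmxBr addrA subrK.
rewrite norm2_sqr dotv_combination [dotv _ (Q *m xc - p)]dotv_mulmx normal_eq dotv0r -!norm2_sqr.
by rewrite expr1n !mul1r mulr0 addr0.
Qed.

Lemma least_squares_ball {m n} (Q : 'M[R]_(m, n)) (p : 'cV[R]_m) (r : R) :
  \rank Q = n -> [set x | norm2 (Q *m x - p) <= r] !=set0 ->
  exists xc rho,
    [set x | norm2 (Q *m x - p) <= r] = [set x | norm2 (Q *m (x - xc)) <= rho].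
Proof.
move=> rkQ [x0 /= x0_in]; set xc := invmx (Q^T *m Q) *m (Q^T *m p).
set d := norm2 (Q *m xc - p).
have pyth (y : 'cV[R]_n) := least_squares_pythagoras Q p y rkQ.
have r0 : 0 <= r := le_trans (norm2_ge0 _) x0_in.
have le_r y : (norm2 (Q *m y - p) <= r) = (norm2 (Q *m (y - xc)) ^+ 2 <= r ^+ 2 - d ^+ 2).
  by rewrite -ler_sqr ?nnegrE ?norm2_ge0 // pyth lerBrDr.
have d_le : d ^+ 2 <= r ^+ 2.
  by move: x0_in; rewrite le_r; have := sqr_ge0 (norm2 (Q *m (x0 - xc))); lra.
exists xc, (Num.sqrt (r ^+ 2 - d ^+ 2)); apply/funext => y /=.
by rewrite le_r -[leRHS]sqr_sqrtr ?subr_ge0 // ler_sqr ?nnegrE ?norm2_ge0 ?sqrtr_ge0.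
Qed.

Lemma dotv_has_lbound_ball {m n} (Q : 'M[R]_(m, n)) (c alpha : 'cV[R]_n) rho :
  \rank Q = n -> has_lbound [set dotv alpha x | x in [set x | norm2 (Q *m (x - c)) <= rho]].
Proof.
move=> rkQ; set L := spec_norm (Q *m invmx (Q^T *m Q)).
exists (dotv alpha c - norm2 alpha * (L * rho)) => _ [x /= x_in <-].
have x_c_le : norm2 (x - c) <= L * rho.
  apply: le_trans (norm2_le_spec_norm_pinv _ _ rkQ) _.
  by rewrite ler_wpM2l ?spec_norm_ge0.
have := dotv_ge_norm2 alpha (x - c); rewrite dotvBr.
have := ler_wpM2l (norm2_ge0 alpha) x_c_le; lra.
Qed.

Definition floorv {n} (x : 'cV[R]_n) : 'cV[R]_n := \col_i (Num.floor (x i 0))%:~R.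

Lemma floorv_int {n} (x : 'cV[R]_n) : intvecs R n (floorv x).
Proof. by move=> i; rewrite mxE intr_int. Qed.

Lemma norm2_sub_floorv {n} (x : 'cV[R]_n) : norm2 (x - floorv x) <= Num.sqrt n%:R.
Proof.
rewrite -[leRHS]mulr1; apply: norm2_le_entries => // i.
rewrite !mxE; have /andP[fl_le lt_fl1] := floor_itv (x i 0).
by rewrite intrD in lt_fl1; rewrite ger0_norm ?subr_ge0 //; lra.
Qed.

Lemma dist_lattice_has_lbound {m n} (Q : 'M[R]_(m, n)) x :
  has_lbound [set norm2 (Q *m x - Q *m z) | z in intvecs R n].
Proof. by exists 0 => _ [z _ <-]; exact: norm2_ge0. Qed.

Lemma covering_radius_has_ubound {m n} (Q : 'M[R]_(m, n)) : has_ubound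
  [set inf [set norm2 (Q *m x - Q *m z) | z in intvecs R n] | x in [set: 'cV[R]_n]].
Proof.
have [K K0 QK] := mulmx_norm2_bounded Q.
exists (K * Num.sqrt n%:R) => _ [x _ <-].
have /lbP := ge_inf (dist_lattice_has_lbound Q x).
move=> /(_ _ (ex_intro2 _ _ _ (floorv_int x) erefl)) /le_trans; apply.
by rewrite -mulmxBr; apply: le_trans (QK _) _; rewrite ler_wpM2l ?norm2_sub_floorv.
Qed.

Lemma covering_radius_approx {m n} (Q : 'M[R]_(m, n)) x eps : 0 < eps ->
  exists2 z, intvecs R n z & norm2 (Q *m (x - z)) < covering_radius Q + eps.
Proof.
move=> eps_gt0.
set D := [set norm2 (Q *m x - Q *m z) | z in intvecs R n].
have D0 : D !=set0.
  by exists (norm2 (Q *m x - Q *m floorv x)); exists (floorv x) => //; apply: floorv_int.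
have /ubP/(_ (inf D) (ex_intro2 _ _ x I erefl)) := ub_le_sup (covering_radius_has_ubound Q).
rewrite -/(covering_radius Q) => infD_le.
have [_ [z Zz <-] z_lt] := inf_lt D0 (le_lt_trans infD_le (ltr_pwDr eps_gt0 (lexx _))).
by exists z; rewrite // mulmxBr.
Qed.

Lemma lattice_point_near_in_ball {m n} (Q : 'M[R]_(m, n)) {c x z0 : 'cV[R]_n}
    {rho eps : R} :
  intvecs R n z0 -> norm2 (Q *m (z0 - c)) <= rho ->
  norm2 (Q *m (x - c)) <= rho -> 0 < eps ->
  exists2 z, intvecs R n z /\ norm2 (Q *m (z - c)) <= rho &
    norm2 (Q *m (z - x)) <= 2 * covering_radius Q + eps.
Proof.
move=> Zz0 z0_in x_in eps_gt0; set mu := covering_radius Q; pose nu := mu + eps / 2.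
have eps2_gt0 : 0 < eps / 2 by rewrite divr_gt0.
have [w0 _ w0_lt] := covering_radius_approx Q 0 _ eps2_gt0.
have nu_gt0 : 0 < nu := le_lt_trans (norm2_ge0 _) w0_lt.
have [rho_le|nu_lt] := lerP rho nu.
  exists z0 => //; have -> : z0 - x = (z0 - c) - (x - c) by rewrite opprB addrA subrK.
  by rewrite mulmxBr; apply: le_trans (norm2B _ _) _; move: rho_le; rewrite /nu; lra.
have rho_gt0 : 0 < rho := lt_trans nu_gt0 nu_lt.
(* [w = c + s (x - c)] has [|Q(w - c)| <= rho - nu], so the ball of radius [nu]
   around [Qw] stays inside the ball of radius [rho] around [Qc]. *)
pose s := (rho - nu) / rho.
have s_rho : s * rho = rho - nu by rewrite divfK ?gt_eqF.
have s0 : 0 <= s by rewrite divr_ge0 ?subr_ge0 ?ltW.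
have s1 : s <= 1 by nra.
pose w := c + s *: (x - c).
have [z Zz wz] := covering_radius_approx Q w _ eps2_gt0.
have norm2_split (y : 'cV[R]_n) k : y = - (w - z) + k *: (x - c) ->
    norm2 (Q *m y) <= nu + `|k| * rho.
  move=> ->; rewrite mulmxDr mulmxN -scalemxAr.
  apply: le_trans (norm2D _ _) _; rewrite norm2N norm2Z.
  by apply: lerD; [exact: ltW | rewrite ler_wpM2l].
exists z; first split => //.
  have zc : z - c = - (w - z) + s *: (x - c).
    by apply/matrixP => i j; rewrite /w !mxE; ring.
  by apply: le_trans (norm2_split _ _ zc) _; rewrite ger0_norm // s_rho subrKC.
have zx : z - x = - (w - z) + (s - 1) *: (x - c).
  by apply/matrixP => i j; rewrite /w !mxE; ring.
apply: le_trans (norm2_split _ _ zx) _; rewrite ler0_norm ?subr_le0 //.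
by move: s_rho; rewrite /nu; nra.
Qed.

End EuclideanGeometry.

Section LatticeApproximation.
Context {R : realType} {m n : nat} {Q : 'M[R]_(m, n)} {S : set 'cV[R]_n}.
Hypothesis rkQ : \rank Q = n.
Hypothesis S_near_lattice : forall x eps, S x -> 0 < eps ->
  exists2 z, (S `&` intvecs R n) z & norm2 (Q *m (z - x)) <= 2 * covering_radius Q + eps.

Let L := spec_norm (Q *m invmx (Q^T *m Q)).
Let mu := covering_radius Q.

Lemma norm2_near_lattice x eps : S x -> 0 < eps ->
  exists2 z, (S `&` intvecs R n) z & norm2 (z - x) <= L * (2 * mu + eps).
Proof.
move=> Sx eps_gt0; have [z SZz zx] := S_near_lattice _ _ Sx eps_gt0.
exists z => //; apply: le_trans (norm2_le_spec_norm_pinv _ _ rkQ) _.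
by rewrite ler_wpM2l ?spec_norm_ge0.
Qed.

Lemma dist_lattice_closure_le xhat : closure S xhat ->
  inf [set norm2 (x - xhat) | x in S `&` intvecs R n] <= 2 * L * mu.
Proof.
move=> S_xhat; have L0 : 0 <= L := spec_norm_ge0 _.
apply: (@ler_addgt0Mr _ _ _ (L + 1)) => [|d d_gt0]; first lra.
have [x Sx x_xhat] := closure_norm2_approx _ _ _ S_xhat d_gt0.
have [z SZz zx] := norm2_near_lattice _ _ Sx d_gt0.
have lb : has_lbound [set norm2 (x - xhat) | x in S `&` intvecs R n].
  by exists 0 => _ [y _ <-]; exact: norm2_ge0.
have /lbP/(_ _ (ex_intro2 _ _ z SZz erefl)) /le_trans := ge_inf lb; apply.
have -> : z - xhat = (z - x) + (x - xhat) by rewrite addrA subrK.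
apply: le_trans (norm2D _ _) _; lra.
Qed.

Lemma dotv_lattice_gap_le alpha : S !=set0 -> has_lbound [set dotv alpha x | x in S] ->
  inf [set dotv alpha x | x in S `&` intvecs R n] - inf [set dotv alpha x | x in S]
    <= 2 * L * norm2 alpha * mu.
Proof.
move=> S0 [b b_lb]; have L0 : 0 <= L := spec_norm_ge0 _.
have a0 := norm2_ge0 alpha.
apply: (@ler_addgt0Mr _ _ _ (1 + norm2 alpha * L)) => [|d d_gt0]; first nra.
have dS0 : [set dotv alpha x | x in S] !=set0 by case: S0 => x Sx; exists (dotv alpha x), x.
have [_ [x Sx <-] x_lt] := inf_lt dS0 (ltr_pwDr d_gt0 (lexx _)).
have [z [Sz Zz] zx] := norm2_near_lattice _ _ Sx d_gt0.
have lbZ : has_lbound [set dotv alpha x | x in S `&` intvecs R n].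
  by exists b => _ [y [Sy _] <-]; apply: b_lb; exists y.
have /lbP/(_ _ (ex_intro2 _ _ z (conj Sz Zz) erefl)) := ge_inf lbZ.
have -> : dotv alpha z = dotv alpha x + dotv alpha (z - x) by rewrite dotvBr addrC subrK.
have := dotv_le_norm2 alpha (z - x).
have := ler_wpM2l a0 zx; nra.
Qed.

End LatticeApproximation.

Theorem proposition6p1 (R : realType) (m n : nat) (Q : 'M[R]_(m, n))
    (p : 'cV[R]_m) (r : R) (xhat : 'cV[R]_n) :
  \rank Q = n ->
  0 < r ->
  let S := [set x : 'cV[R]_n | norm2 (Q *m x - p) <= r] in
  S `&` intvecs R n !=set0 ->
  xhat \in boundary S ->
  inf [set norm2 (x - xhat) | x in S `&` intvecs R n]
    <= 2 * spec_norm (Q *m invmx (Q^T *m Q)) * covering_radius Q /\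
  (forall alpha : 'cV[R]_n,
    inf [set dotv alpha x | x in S `&` intvecs R n]
      - inf [set dotv alpha x | x in S]
    <= 2 * spec_norm (Q *m invmx (Q^T *m Q)) * norm2 alpha * covering_radius Q).
Proof.
move=> rkQ _ S [z0 [Sz0 Zz0]]; rewrite in_setE => -[S_xhat _].
have [xc [rho S_ball]] := least_squares_ball _ _ _ rkQ (ex_intro _ z0 Sz0).
rewrite /S S_ball in Sz0 S_xhat *.
have S_near x eps : norm2 (Q *m (x - xc)) <= rho -> 0 < eps -> exists2 z,
    ([set x | norm2 (Q *m (x - xc)) <= rho] `&` intvecs R n) z &
    norm2 (Q *m (z - x)) <= 2 * covering_radius Q + eps.
  move=> x_in eps_gt0.
  by have [z [Zz z_in] zx] := lattice_point_near_in_ball Q Zz0 Sz0 x_in eps_gt0; exists z.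
split; first exact: dist_lattice_closure_le rkQ S_near _ S_xhat.
move=> alpha; apply: (dotv_lattice_gap_le rkQ S_near); first by exists z0.
exact: dotv_has_lbound_ball _ _ _ _ rkQ.
Qed.
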